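(* Let $(\mathcal{S},\widehat{\mathcal{S}},\sigma,\tau,\iota)$ be a duplicated category of sets and let $A$ be an object of $\mathcal{S}$. Every global element $x:1=\tau(1)\to\tau(A)$ in $\widehat{\mathcal{S}}$ is internal. Consequently, every global element of $\tau(A)$ is either standard or nonstandard.
   Context: A duplicated category of sets is a quintet $(\mathcal{S},\widehat{\mathcal{S}},\sigma,\tau,\iota)$ such that: (i) $\mathcal{S}$ and $\widehat{\mathcal{S}}$ are categories satisfying Lawvere's axioms of the Elementary Theory of the Category of Sets (ETCS), i.e. each is a well-pointed topos with a natural numbers object satisfying the axiom of choice; (ii) $\sigma:\mathcal{S}\to\widehat{\mathcal{S}}$ is a functor preserving all finite limits, the subobject classifier $2$, exponentials and natural numbers objects; (iii) $\tau:\mathcal{S}\to\widehat{\mathcal{S}}$ is a functor preserving all finite limits; (iv) $\iota:\sigma\to\tau$ is a natural transformation such that $\iota_X=\mathrm{id}_{\sigma(X)}=\mathrm{id}_{\tau(X)}$ for every finite object $X$ of $\mathcal{S}$ (so $\sigma(1)=\tau(1)=1$). For objects $A,B$ of $\mathcal{S}$, $\kappa_{A,B}:\tau(B^A)\to\tau(B)^{\tau(A)}$ is the exponential transpose of $\tau(A)\times\tau(B^A)\cong\tau(A\times B^A)\xrightarrow{\tau(ev_{A,B})}\tau(B)$, where $ev_{A,B}:A\times B^A\to B$ is evaluation. A morphism $F:\tau(A)\to\tau(B)$ in $\widehat{\mathcal{S}}$, with name $\widehat{F}:1\to\tau(B)^{\tau(A)}$, is called standard if $\widehat{F}$ factors through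 $\kappa_{A,B}\circ\iota_{B^A}:\sigma(B^A)\to\tau(B)^{\tau(A)}$, internal if $\widehat{F}$ factors through $\kappa_{A,B}$, external if it is not internal, and nonstandard if it is internal but not standard. A global element $x:1\to\tau(A)$ is regarded as a morphism $\tau(1)\to\tau(A)$ for these notions (with $A$ in place of $B$ and $1$ in place of $A$). *)

Set Implicit Arguments.
Unset Strict Implicit.

Record Cat : Type := {
  Ob :> Type;
  Hom : Ob -> Ob -> Type;
  idm : forall A, Hom A A;
  comp : forall A B C, Hom B C -> Hom A B -> Hom A C;
  comp_id_l : forall A B (f : Hom A B), comp (idm B) f = f;
  comp_id_r : forall A B (f : Hom A B), comp f (idm A) = f;
  comp_assoc : forall A B C D (f : Hom A B) (g : Hom B C) (h : Hom C D),
      comp h (comp g f) = comp (comp h g) f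
}.
Arguments Hom {c} _ _.
Arguments idm {c} A.
Arguments comp {c A B C} _ _.

Section CatDefs.
Context {C : Cat}.

Definition is_mono {A B : C} (m : Hom A B) : Prop :=
  forall X (f g : Hom X A), comp m f = comp m g -> f = g.

Definition is_epi {A B : C} (e : Hom A B) : Prop :=
  forall Y (f g : Hom B Y), comp f e = comp g e -> f = g.

Definition is_iso {A B : C} (f : Hom A B) : Prop :=
  exists g : Hom B A, comp g f = idm A /\ comp f g = idm B.

Definition is_terminal (T : C) : Prop :=
  forall X : C, exists! f : Hom X T, True.

Definition is_product {A B P : C} (p1 : Hom P A) (p2 : Hom P B) : Prop :=
  forall X (f : Hom X A) (g : Hom X B),
    exists! h : Hom X P, comp p1 h = f /\ comp p2 h = g.

Definition is_equalizer {E X Y : C} (e : Hom E X) (f g : Hom X Y) : Prop :=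
  comp f e = comp g e /\
  forall Z (h : Hom Z X), comp f h = comp g h ->
    exists! u : Hom Z E, comp e u = h.

Definition is_pullback {P X Y Z : C} (p1 : Hom P X) (p2 : Hom P Y)
    (f : Hom X Z) (g : Hom Y Z) : Prop :=
  comp f p1 = comp g p2 /\
  forall Q (q1 : Hom Q X) (q2 : Hom Q Y), comp f q1 = comp g q2 ->
    exists! u : Hom Q P, comp p1 u = q1 /\ comp p2 u = q2.

Definition is_subobject_classifier {T O : C} (t : Hom T O) : Prop :=
  is_terminal T /\
  forall U X (m : Hom U X), is_mono m ->
    exists! chi : Hom X O, forall u : Hom U T, is_pullback m u chi t.

Definition is_nno {T N : C} (z : Hom T N) (s : Hom N N) : Prop :=
  is_terminal T /\
  forall X (x : Hom T X) (f : Hom X X),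
    exists! h : Hom N X, comp h z = x /\ comp h s = comp f h.

(** [E] is the exponential [B^A] with evaluation [e : P -> B], where
    [P] (with projections [p1], [p2]) is a product [A x E]:
    for every product [Q = A x C] and [g : Q -> B] there is a unique
    [h : C -> E] with [e o (id x h) = g]. *)
Definition is_exponential {A B E P : C} (p1 : Hom P A) (p2 : Hom P E)
    (e : Hom P B) : Prop :=
  is_product p1 p2 /\
  forall Q (D : C) (q1 : Hom Q A) (q2 : Hom Q D) (g : Hom Q B),
    is_product q1 q2 ->
    exists! h : Hom D E, forall k : Hom Q P,
      comp p1 k = q1 -> comp p2 k = comp h q2 -> comp e k = g.

Definition is_finite (X : C) : Prop :=
  forall m : Hom X X, is_mono m -> is_iso m.

End CatDefs.

Record ETCS : Type := {
  ecat :> Cat;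
  one : ecat;
  one_terminal : is_terminal one;
  prod : ecat -> ecat -> ecat;
  pr1 : forall A B, Hom (prod A B) A;
  pr2 : forall A B, Hom (prod A B) B;
  prod_ok : forall A B, is_product (pr1 A B) (pr2 A B);
  equalizers : forall (X Y : ecat) (f g : Hom X Y),
      exists (E : ecat) (e : Hom E X), is_equalizer e f g;
  (* exp A B is B^A, ev A B : A x B^A -> B *)
  exp : ecat -> ecat -> ecat;
  ev : forall A B, Hom (prod A (exp A B)) B;
  exp_ok : forall A B, is_exponential (pr1 A (exp A B)) (pr2 A (exp A B)) (ev A B);
  omega : ecat;
  tru : Hom one omega;
  omega_ok : is_subobject_classifier tru;
  nno : ecat;
  zero : Hom one nno;
  succ : Hom nno nno;
  nno_ok : is_nno zero succ;
  well_pointed : forall (X Y : ecat) (f g : Hom X Y),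
      (forall x : Hom one X, comp f x = comp g x) -> f = g;
  nondegenerate : exists (X : ecat) (x y : Hom one X), x <> y;
  choice : forall (X Y : ecat) (e : Hom X Y), is_epi e ->
      exists s : Hom Y X, comp e s = idm Y
}.
Arguments one {e0}.
Arguments prod {e0} _ _.
Arguments pr1 {e0 A B}.
Arguments pr2 {e0 A B}.
Arguments exp {e0} _ _.
Arguments ev {e0 A B}.
Arguments omega {e0}.
Arguments tru {e0}.
Arguments nno {e0}.
Arguments zero {e0}.
Arguments succ {e0}.

Record Functor (C D : Cat) : Type := {
  fobj : C -> D;
  fmap : forall A B : C, Hom A B -> Hom (fobj A) (fobj B);
  fmap_id : forall A : C, fmap (idm A) = idm (fobj A);
  fmap_comp : forall (A B E : C) (f : Hom A B) (g : Hom B E),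
      fmap (comp g f) = comp (fmap g) (fmap f)
}.
Arguments fobj {C D} f0 _.
Arguments fmap {C D} f0 {A B} _.

Record NatTrans {C D : Cat} (F G : Functor C D) : Type := {
  ntc : forall X : C, Hom (fobj F X) (fobj G X);
  nt_natural : forall (X Y : C) (f : Hom X Y),
      comp (ntc Y) (fmap F f) = comp (fmap G f) (ntc X)
}.
Arguments ntc {C D F G} n X.

Section Preservation.
Context {C D : Cat} (F : Functor C D).

Definition preserves_finite_limits : Prop :=
  (forall T : C, is_terminal T -> is_terminal (fobj F T)) /\
  (forall (A B P : C) (p1 : Hom P A) (p2 : Hom P B),
      is_product p1 p2 -> is_product (fmap F p1) (fmap F p2)) /\
  (forall (E X Y : C) (e : Hom E X) (f g : Hom X Y),
      is_equalizer e f g -> is_equalizer (fmap F e) (fmap F f) (fmap F g)).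

Definition preserves_subobject_classifier : Prop :=
  forall (T O : C) (t : Hom T O),
    is_subobject_classifier t -> is_subobject_classifier (fmap F t).

Definition preserves_exponentials : Prop :=
  forall (A B E P : C) (p1 : Hom P A) (p2 : Hom P E) (e : Hom P B),
    is_exponential p1 p2 e -> is_exponential (fmap F p1) (fmap F p2) (fmap F e).

Definition preserves_nno : Prop :=
  forall (T N : C) (z : Hom T N) (s : Hom N N),
    is_nno z s -> is_nno (fmap F z) (fmap F s).

End Preservation.

Record Duplicated : Type := {
  dS : ETCS;
  dSh : ETCS;
  sigma : Functor dS dSh;
  tau : Functor dS dSh;
  iota : NatTrans sigma tau;
  sigma_lim : preserves_finite_limits sigma;
  sigma_omega : preserves_subobject_classifier sigma;
  sigma_exp : preserves_exponentials sigma;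
  sigma_nno : preserves_nno sigma;
  tau_lim : preserves_finite_limits tau;
  iota_finite : forall X : dS, is_finite X ->
    exists e : fobj sigma X = fobj tau X,
      ntc iota X = match e in _ = Y return Hom (fobj sigma X) Y with
                   | eq_refl => idm (fobj sigma X) end
}.

Section Standardness.
Variable D : Duplicated.
Let S := dS D.
Let Sh := dSh D.
Let t := tau D.
Let s := sigma D.

(** [k] is kappa_{A,B} : tau(B^A) -> tau(B)^tau(A), the transpose of
    tau(A) x tau(B^A) ~= tau(A x B^A) --tau(ev)--> tau(B); equivalently
    ev o (id x k) o <tau pr1, tau pr2> = tau(ev). *)
Definition is_kappa (A B : S)
    (k : Hom (fobj t (exp A B)) (@exp Sh (fobj t A) (fobj t B))) : Prop :=
  forall h : Hom (fobj t (prod A (exp A B)))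
                 (@prod Sh (fobj t A) (@exp Sh (fobj t A) (fobj t B))),
    comp pr1 h = fmap t pr1 -> comp pr2 h = comp k (fmap t pr2) ->
    comp ev h = fmap t (@ev S A B).

(** [n : 1 -> tau(B)^tau(A)] is the name of [F : tau(A) -> tau(B)], i.e. the
    transpose of [F o pr1 : tau(A) x 1 -> tau(B)]. *)
Definition is_name {A B : S} (F : Hom (fobj t A) (fobj t B))
    (n : Hom (@one Sh) (@exp Sh (fobj t A) (fobj t B))) : Prop :=
  forall h : Hom (@prod Sh (fobj t A) (@one Sh))
                 (@prod Sh (fobj t A) (@exp Sh (fobj t A) (fobj t B))),
    comp pr1 h = pr1 -> comp pr2 h = comp n pr2 ->
    comp ev h = comp F pr1.

Definition is_standard {A B : S} (F : Hom (fobj t A) (fobj t B)) : Prop :=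
  exists n k (y : Hom (@one Sh) (fobj s (exp A B))),
    is_name F n /\ is_kappa k /\ n = comp k (comp (ntc (iota D) (exp A B)) y).

Definition is_internal {A B : S} (F : Hom (fobj t A) (fobj t B)) : Prop :=
  exists n k (y : Hom (@one Sh) (fobj t (exp A B))),
    is_name F n /\ is_kappa k /\ n = comp k y.

Definition is_external {A B : S} (F : Hom (fobj t A) (fobj t B)) : Prop :=
  ~ is_internal F.

Definition is_nonstandard {A B : S} (F : Hom (fobj t A) (fobj t B)) : Prop :=
  is_internal F /\ ~ is_standard F.

(** A global element [x : 1 -> tau(A)] regarded as the morphism
    [x o u : tau(1) -> tau(A)], with [u : tau(1) -> 1] the (unique) map. *)
Definition ge_standard {A : S} (x : Hom (@one Sh) (fobj t A)) : Prop :=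
  exists u : Hom (fobj t (@one S)) (@one Sh), is_standard (comp x u).

Definition ge_internal {A : S} (x : Hom (@one Sh) (fobj t A)) : Prop :=
  exists u : Hom (fobj t (@one S)) (@one Sh), is_internal (comp x u).

Definition ge_nonstandard {A : S} (x : Hom (@one Sh) (fobj t A)) : Prop :=
  exists u : Hom (fobj t (@one S)) (@one Sh), is_nonstandard (comp x u).

End Standardness.

Arguments ge_standard D {A} x.
Arguments ge_internal D {A} x.
Arguments ge_nonstandard D {A} x.

(* Write [A^1] for [exp one A].  The exponential transpose [m : A -> A^1] of
   [pr2 : 1 x A -> A] turns a global element [x : 1 -> tau(A)] into the
   global element [tau(m) o x] of [tau(A^1)]; pushing it through
   [kappa_{1,A}] gives the name of [x o u : tau(1) -> tau(A)], because
   [ev o (1 x m) = pr2] and [tau] preserves products. *)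
From Stdlib Require Import Classical.

Set Implicit Arguments.
Unset Strict Implicit.

Lemma terminal_hom_eq (C : Cat) (T X : C) (f g : Hom X T) :
  is_terminal T -> f = g.
Proof.
  intros HT; destruct (HT X) as [h [_ Hh]].
  now rewrite <- (Hh f I), <- (Hh g I).
Qed.

Section ProductsAndExponentials.
Variable E : ETCS.

Lemma pair_exists (X A B : E) (f : Hom X A) (g : Hom X B) :
  exists h : Hom X (prod A B), comp pr1 h = f /\ comp pr2 h = g.
Proof.
  destruct (@prod_ok E A B X f g) as [h [Hh _]]; now exists h.
Qed.

Lemma prod_hom_ext (X A B : E) (f g : Hom X (prod A B)) :
  comp pr1 f = comp pr1 g -> comp pr2 f = comp pr2 g -> f = g.
Proof.
  intros H1 H2.
  destruct (@prod_ok E A B X (comp pr1 g) (comp pr2 g)) as [h [_ Hu]].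
  transitivity h; [symmetry|]; apply Hu; auto.
Qed.

Lemma transpose_exists (A B Q X : E) (q1 : Hom Q A) (q2 : Hom Q X)
    (g : Hom Q B) :
  is_product q1 q2 ->
  exists h : Hom X (exp A B), forall k : Hom Q (prod A (exp A B)),
    comp pr1 k = q1 -> comp pr2 k = comp h q2 -> comp ev k = g.
Proof.
  intros HQ; destruct (exp_ok A B) as [_ Hex].
  destruct (Hex Q X q1 q2 g HQ) as [h [Hh _]]; now exists h.
Qed.

End ProductsAndExponentials.

Lemma tau_pair_exists (D : Duplicated) (X : dSh D) (A B : dS D)
    (f : Hom X (fobj (tau D) A)) (g : Hom X (fobj (tau D) B)) :
  exists h : Hom X (fobj (tau D) (prod A B)),
    comp (fmap (tau D) pr1) h = f /\ comp (fmap (tau D) pr2) h = g.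
Proof.
  destruct (tau_lim D) as [_ [Hprod _]].
  destruct (Hprod _ _ _ _ _ (@prod_ok _ A B) X f g) as [h [Hh _]]; now exists h.
Qed.

Lemma kappa_exists (D : Duplicated) (A B : dS D) :
  exists k : Hom (fobj (tau D) (exp A B))
                 (@exp (dSh D) (fobj (tau D) A) (fobj (tau D) B)),
    is_kappa k.
Proof.
  destruct (tau_lim D) as [_ [Hprod _]].
  exact (transpose_exists (fmap (tau D) (@ev _ A B))
           (Hprod _ _ _ _ _ (@prod_ok _ A (exp A B)))).
Qed.

Lemma global_element_internal (D : Duplicated) (A : dS D)
    (x : Hom (@one (dSh D)) (fobj (tau D) A))
    (u : Hom (fobj (tau D) (@one (dS D))) (@one (dSh D))) :
  is_internal (comp x u).
Proof.
  destruct (transpose_exists (@pr2 _ one A) (@prod_ok _ one A)) as [m Hm].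
  destruct (@kappa_exists D one A) as [k Hk].
  exists (comp k (comp (fmap (tau D) m) x)), k, (comp (fmap (tau D) m) x).
  split; [| split; [exact Hk | reflexivity]].
  intros h Hh1 Hh2.
  destruct (pair_exists (@pr1 _ one A) (comp m pr2)) as [one_x_m [Him1 Him2]].
  destruct (tau_pair_exists (@pr1 _ (fobj (tau D) one) one) (comp x pr2))
    as [pair_x [HK1 HK2]].
  destruct (pair_exists (fmap (tau D) (@pr1 _ one (exp one A)))
                 (comp k (fmap (tau D) pr2))) as [id_x_k [H01 H02]].
  assert (h_factor : h = comp id_x_k (comp (fmap (tau D) one_x_m) pair_x)).
  { apply prod_hom_ext.
    - rewrite Hh1, comp_assoc, H01, comp_assoc, <- fmap_comp, Him1.
      now rewrite HK1.
    - rewrite Hh2, (comp_assoc _ id_x_k), H02, <- !comp_assoc; f_equal.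
      rewrite (comp_assoc pair_x), <- fmap_comp, Him2, fmap_comp, <- comp_assoc.
      now rewrite HK2. }
  subst h.
  rewrite comp_assoc, (Hk id_x_k H01 H02), comp_assoc, <- fmap_comp.
  rewrite (Hm one_x_m Him1 Him2), HK2, <- comp_assoc; f_equal.
  apply terminal_hom_eq, one_terminal.
Qed.

Theorem mainTheorem5 (D : Duplicated) (A : dS D)
    (x : Hom (@one (dSh D)) (fobj (tau D) A)) :
  ge_internal D x /\ (ge_standard D x \/ ge_nonstandard D x).
Proof.
  destruct (@one_terminal (dSh D) (fobj (tau D) (@one (dS D)))) as [u _].
  split; [exists u; apply global_element_internal |].
  destruct (classic (ge_standard D x)) as [Hs | Hs]; [now left | right].
  exists u; split; [apply global_element_internal |].
  intros H; apply Hs; now exists u.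
Qed.
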